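(* Let $(G_1,G_2)$ be a two-player game in which each player has two strategies $A,B$, with payoffs $G_1=\begin{bmatrix}g_1^{AA}&g_1^{AB}\\ g_1^{BA}&g_1^{BB}\end{bmatrix}$, $G_2=\begin{bmatrix}g_2^{AA}&g_2^{AB}\\ g_2^{BA}&g_2^{BB}\end{bmatrix}$ (rows indexed by player 1's strategy, columns by player 2's), and suppose both payoffs are nontrivial, i.e. $(g_1^{AA}-g_1^{BA},\,g_1^{AB}-g_1^{BB})\ne(0,0)$ and $(g_2^{AA}-g_2^{AB},\,g_2^{BA}-g_2^{BB})\ne(0,0)$. Define $\theta_1,\theta_2$ by $\theta_1+\frac{\pi}{4}=\mathrm{arctan2}(g_1^{AA}-g_1^{BA},\,g_1^{AB}-g_1^{BB})$ and $\theta_2+\frac{\pi}{4}=\mathrm{arctan2}(g_2^{AA}-g_2^{AB},\,g_2^{BA}-g_2^{BB})$, and set \[ G^{\mathrm{equil}}_1(\theta_1)=\begin{bmatrix}\frac{1}{\sqrt2}\sin(\theta_1+\frac{\pi}{4})&\frac{1}{\sqrt2}\cos(\theta_1+\frac{\pi}{4})\\ -\frac{1}{\sqrt2}\sin(\theta_1+\frac{\pi}{4})&-\frac{1}{\sqrt2}\cos(\theta_1+\frac{\pi}{4})\end{bmatrix},\qquad G^{\mathrm{equil}}_2(\theta_2)=\begin{bmatrix}\frac{1}{\sqrt2}\sin(\theta_2+\frac{\pi}{4})&-\frac{1}{\sqrt2}\sin(\theta_2+\frac{\pi}{4})\\ \frac{1}{\sqrt2}\cos(\theta_2+\frac{\pi}{4})&-\frac{1}{\sqrt2}\cos(\theta_2+\frac{\pi}{4})\end{bmatrix}.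 \] Then the games $(G_1,G_2)$ and $(G^{\mathrm{equil}}_1(\theta_1),G^{\mathrm{equil}}_2(\theta_2))$ have the same set of Nash equilibria, the same set of correlated equilibria, and the same set of coarse correlated equilibria.
   Context: $\mathrm{arctan2}(y,x)$ is the standard two-argument arctangent, the angle $\alpha$ with $(\cos\alpha,\sin\alpha)=(x,y)/\sqrt{x^2+y^2}$. For a finite game with payoffs $G_p$ on joint strategies $a=(a_p,a_{-p})$: a joint distribution $\sigma$ is a correlated equilibrium if for every player $p$ and all $a''_p\ne a'_p$, $\sum_{a_{-p}}\sigma(a''_p,a_{-p})\big(G_p(a'_p,a_{-p})-G_p(a''_p,a_{-p})\big)\le0$; a coarse correlated equilibrium if for every $p$ and $a'_p$, $\sum_a\sigma(a)\big(G_p(a'_p,a_{-p})-G_p(a)\big)\le0$; a Nash equilibrium is a correlated equilibrium that is a product of independent marginals $\sigma(a)=\prod_q\sigma_q(a_q)$. *)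

From Stdlib Require Import Reals.
Open Scope R_scope.

Inductive strat : Type := SA | SB.

Definition sumS (f : strat -> R) : R := f SA + f SB.

(** A payoff matrix: [G a1 a2] is the payoff when player 1 plays [a1]
    (row) and player 2 plays [a2] (column). *)
Definition payoff := strat -> strat -> R.

(** Standard two-argument arctangent arctan2(y, x) in (-PI, PI]
    (value 0 at the origin, irrelevant here). *)
Definition atan2 (y x : R) : R :=
  if Rlt_dec 0 x then atan (y / x)
  else if Rlt_dec x 0 then
    (if Rle_dec 0 y then atan (y / x) + PI else atan (y / x) - PI)
  else if Rlt_dec 0 y then PI / 2
  else if Rlt_dec y 0 then - (PI / 2)
  else 0.

Definition is_dist (p : strat -> R) : Prop :=
  (forall a, 0 <= p a) /\ sumS p = 1.

Definition is_joint_dist (s : strat -> strat -> R) : Prop :=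
  (forall a b, 0 <= s a b) /\ sumS (fun a => sumS (fun b => s a b)) = 1.

Definition is_CE (G1 G2 : payoff) (s : strat -> strat -> R) : Prop :=
  is_joint_dist s /\
  (forall a'' a' : strat, a'' <> a' ->
     sumS (fun b => s a'' b * (G1 a' b - G1 a'' b)) <= 0) /\
  (forall b'' b' : strat, b'' <> b' ->
     sumS (fun a => s a b'' * (G2 a b' - G2 a b'')) <= 0).

Definition is_CCE (G1 G2 : payoff) (s : strat -> strat -> R) : Prop :=
  is_joint_dist s /\
  (forall a' : strat,
     sumS (fun a => sumS (fun b => s a b * (G1 a' b - G1 a b))) <= 0) /\
  (forall b' : strat,
     sumS (fun a => sumS (fun b => s a b * (G2 a b' - G2 a b))) <= 0).

Definition is_NE (G1 G2 : payoff) (s : strat -> strat -> R) : Prop :=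
  is_CE G1 G2 s /\
  exists p q : strat -> R, is_dist p /\ is_dist q /\
    forall a b, s a b = p a * q b.

Definition Gequil1 (t : R) : payoff := fun a b =>
  match a, b with
  | SA, SA => / sqrt 2 * sin (t + PI / 4)
  | SA, SB => / sqrt 2 * cos (t + PI / 4)
  | SB, SA => - (/ sqrt 2 * sin (t + PI / 4))
  | SB, SB => - (/ sqrt 2 * cos (t + PI / 4))
  end.

Definition Gequil2 (t : R) : payoff := fun a b =>
  match a, b with
  | SA, SA => / sqrt 2 * sin (t + PI / 4)
  | SA, SB => - (/ sqrt 2 * sin (t + PI / 4))
  | SB, SA => / sqrt 2 * cos (t + PI / 4)
  | SB, SB => - (/ sqrt 2 * cos (t + PI / 4))
  end.

Definition theta1 (G1 : payoff) : R :=
  atan2 (G1 SA SA - G1 SB SA) (G1 SA SB - G1 SB SB) - PI / 4.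

Definition theta2 (G2 : payoff) : R :=
  atan2 (G2 SA SA - G2 SA SB) (G2 SB SA - G2 SB SB) - PI / 4.

(** All three equilibrium notions only involve each player's payoff
    differences between his own strategies, and are unchanged when these
    differences are multiplied by a positive constant.  For
    [alpha = arctan2(y, x)] we have [(sin alpha, cos alpha) = k (y, x)] with
    [k > 0], and the row differences of [Gequil1 (alpha - PI/4)] are
    [sqrt 2 (sin alpha, cos alpha)]; taking for [(y, x)] the row differences
    of [G1], the two games differ for player 1 by the factor [sqrt 2 k] > 0,
    and likewise (with columns) for player 2. *)

From Stdlib Require Import Reals Lra.
Open Scope R_scope.

Lemma Rmult_nonpos_iff_l (c x : R) : 0 < c -> c * x <= 0 <-> x <= 0.
Proof. intros; split; intros; nra. Qed.

Definition scaled_rows (c : R) (G E : payoff) : Prop :=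
  forall b, E SA b - E SB b = c * (G SA b - G SB b).

Definition scaled_cols (c : R) (G E : payoff) : Prop :=
  forall a, E a SA - E a SB = c * (G a SA - G a SB).

Section ScaledGames.

Variables (G1 G2 E1 E2 : payoff) (c1 c2 : R).
Hypotheses (c1_gt0 : 0 < c1) (c2_gt0 : 0 < c2).
Hypotheses (rows1 : scaled_rows c1 G1 E1) (cols2 : scaled_cols c2 G2 E2).

Let E1_SB (b : strat) : E1 SB b = E1 SA b - c1 * (G1 SA b - G1 SB b).
Proof. rewrite <- rows1; ring. Qed.

Let E2_SB (a : strat) : E2 a SB = E2 a SA - c2 * (G2 a SA - G2 a SB).
Proof. rewrite <- cols2; ring. Qed.

Lemma swap_regret1_scaled (s : strat -> strat -> R) (a'' a' : strat) :
  sumS (fun b => s a'' b * (E1 a' b - E1 a'' b)) =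
  c1 * sumS (fun b => s a'' b * (G1 a' b - G1 a'' b)).
Proof. destruct a'', a'; unfold sumS; rewrite ?E1_SB; ring. Qed.

Lemma swap_regret2_scaled (s : strat -> strat -> R) (b'' b' : strat) :
  sumS (fun a => s a b'' * (E2 a b' - E2 a b'')) =
  c2 * sumS (fun a => s a b'' * (G2 a b' - G2 a b'')).
Proof. destruct b'', b'; unfold sumS; rewrite ?E2_SB; ring. Qed.

Lemma ext_regret1_scaled (s : strat -> strat -> R) (a' : strat) :
  sumS (fun a => sumS (fun b => s a b * (E1 a' b - E1 a b))) =
  c1 * sumS (fun a => sumS (fun b => s a b * (G1 a' b - G1 a b))).
Proof. destruct a'; unfold sumS; rewrite ?E1_SB; ring. Qed.

Lemma ext_regret2_scaled (s : strat -> strat -> R) (b' : strat) :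
  sumS (fun a => sumS (fun b => s a b * (E2 a b' - E2 a b))) =
  c2 * sumS (fun a => sumS (fun b => s a b * (G2 a b' - G2 a b))).
Proof. destruct b'; unfold sumS; rewrite ?E2_SB; ring. Qed.

Lemma is_CE_scaled (s : strat -> strat -> R) : is_CE G1 G2 s <-> is_CE E1 E2 s.
Proof.
  unfold is_CE; setoid_rewrite swap_regret1_scaled; setoid_rewrite swap_regret2_scaled.
  setoid_rewrite (Rmult_nonpos_iff_l c1 _ c1_gt0).
  setoid_rewrite (Rmult_nonpos_iff_l c2 _ c2_gt0).
  reflexivity.
Qed.

Lemma is_NE_scaled (s : strat -> strat -> R) : is_NE G1 G2 s <-> is_NE E1 E2 s.
Proof. unfold is_NE; rewrite is_CE_scaled; reflexivity. Qed.

Lemma is_CCE_scaled (s : strat -> strat -> R) : is_CCE G1 G2 s <-> is_CCE E1 E2 s.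
Proof.
  unfold is_CCE; setoid_rewrite ext_regret1_scaled; setoid_rewrite ext_regret2_scaled.
  setoid_rewrite (Rmult_nonpos_iff_l c1 _ c1_gt0).
  setoid_rewrite (Rmult_nonpos_iff_l c2 _ c2_gt0).
  reflexivity.
Qed.

End ScaledGames.

Lemma cos_atan_gt_0 (z : R) : 0 < cos (atan z).
Proof.
  rewrite cos_atan; apply Rdiv_lt_0_compat; [lra |].
  apply sqrt_lt_R0; pose proof (Rle_0_sqr z); lra.
Qed.

Lemma sin_atan_cos (z : R) : sin (atan z) = z * cos (atan z).
Proof.
  rewrite sin_atan, cos_atan; field.
  apply Rgt_not_eq, sqrt_lt_R0; pose proof (Rle_0_sqr z); lra.
Qed.

Lemma atan2_polar (y x : R) : (y, x) <> (0, 0) ->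
  exists k, 0 < k /\ sin (atan2 y x) = k * y /\ cos (atan2 y x) = k * x.
Proof.
  intro yx_neq0; unfold atan2.
  pose proof (cos_atan_gt_0 (y / x)) as cos_gt0.
  destruct (Rlt_dec 0 x) as [x_gt0 |].
  { exists (cos (atan (y / x)) / x); split; [now apply Rdiv_lt_0_compat |].
    rewrite sin_atan_cos; split; field; lra. }
  destruct (Rlt_dec x 0) as [x_lt0 |].
  { exists (cos (atan (y / x)) / - x); split; [apply Rdiv_lt_0_compat; lra |].
    destruct (Rle_dec 0 y);
      rewrite ?sin_plus, ?cos_plus, ?sin_minus, ?cos_minus, sin_PI, cos_PI, sin_atan_cos;
      split; field; lra. }
  assert (x = 0) as -> by lra.
  destruct (Rlt_dec 0 y) as [y_gt0 |].
  { exists (/ y); rewrite sin_PI2, cos_PI2; split; [now apply Rinv_0_lt_compat |].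
    split; field; lra. }
  destruct (Rlt_dec y 0) as [y_lt0 |].
  { exists (/ - y); rewrite sin_neg, cos_neg, sin_PI2, cos_PI2.
    split; [apply Rinv_0_lt_compat; lra |]; split; field; lra. }
  exfalso; apply yx_neq0; f_equal; lra.
Qed.

Lemma sqrt2_neq0 : sqrt 2 <> 0.
Proof. apply Rgt_not_eq, sqrt_lt_R0; lra. Qed.

Lemma Gequil1_row_diff (alpha : R) (b : strat) :
  Gequil1 (alpha - PI / 4) SA b - Gequil1 (alpha - PI / 4) SB b =
  2 / sqrt 2 * match b with SA => sin alpha | SB => cos alpha end.
Proof.
  unfold Gequil1; replace (alpha - PI / 4 + PI / 4) with alpha by ring.
  pose proof sqrt2_neq0; destruct b; field; auto.
Qed.

Lemma Gequil2_col_diff (alpha : R) (a : strat) :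
  Gequil2 (alpha - PI / 4) a SA - Gequil2 (alpha - PI / 4) a SB =
  2 / sqrt 2 * match a with SA => sin alpha | SB => cos alpha end.
Proof.
  unfold Gequil2; replace (alpha - PI / 4 + PI / 4) with alpha by ring.
  pose proof sqrt2_neq0; destruct a; field; auto.
Qed.

Lemma two_div_sqrt2_gt0 : 0 < 2 / sqrt 2.
Proof. apply Rdiv_lt_0_compat; [lra | apply sqrt_lt_R0; lra]. Qed.

Lemma scaled_rows_Gequil1 (G1 : payoff) :
  (G1 SA SA - G1 SB SA, G1 SA SB - G1 SB SB) <> (0, 0) ->
  exists c, 0 < c /\ scaled_rows c G1 (Gequil1 (theta1 G1)).
Proof.
  intro nontriv; destruct (atan2_polar _ _ nontriv) as (k & k_gt0 & sin_eq & cos_eq).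
  exists (2 / sqrt 2 * k); split; [apply Rmult_lt_0_compat; auto using two_div_sqrt2_gt0 |].
  intro b; unfold theta1; rewrite Gequil1_row_diff.
  destruct b; [rewrite sin_eq | rewrite cos_eq]; ring.
Qed.

Lemma scaled_cols_Gequil2 (G2 : payoff) :
  (G2 SA SA - G2 SA SB, G2 SB SA - G2 SB SB) <> (0, 0) ->
  exists c, 0 < c /\ scaled_cols c G2 (Gequil2 (theta2 G2)).
Proof.
  intro nontriv; destruct (atan2_polar _ _ nontriv) as (k & k_gt0 & sin_eq & cos_eq).
  exists (2 / sqrt 2 * k); split; [apply Rmult_lt_0_compat; auto using two_div_sqrt2_gt0 |].
  intro a; unfold theta2; rewrite Gequil2_col_diff.
  destruct a; [rewrite sin_eq | rewrite cos_eq]; ring.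
Qed.

Theorem mainTheorem3 (G1 G2 : payoff)
  (h1 : (G1 SA SA - G1 SB SA, G1 SA SB - G1 SB SB) <> (0, 0))
  (h2 : (G2 SA SA - G2 SA SB, G2 SB SA - G2 SB SB) <> (0, 0)) :
  let E1 := Gequil1 (theta1 G1) in
  let E2 := Gequil2 (theta2 G2) in
  (forall s, is_NE G1 G2 s <-> is_NE E1 E2 s) /\
  (forall s, is_CE G1 G2 s <-> is_CE E1 E2 s) /\
  (forall s, is_CCE G1 G2 s <-> is_CCE E1 E2 s).
Proof.
  intros E1 E2.
  destruct (scaled_rows_Gequil1 G1 h1) as (c1 & c1_gt0 & rows1).
  destruct (scaled_cols_Gequil2 G2 h2) as (c2 & c2_gt0 & cols2).
  split; [| split]; intro s;
    [ apply (is_NE_scaled G1 G2 E1 E2 c1 c2)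
    | apply (is_CE_scaled G1 G2 E1 E2 c1 c2)
    | apply (is_CCE_scaled G1 G2 E1 E2 c1 c2) ]; assumption.
Qed.
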